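(* Let $d\in\mathbb{N}$ and $\mathcal{M}\subseteq\mathbb{N}_0^d$ with $\boldsymbol 0\notin\mathcal{M}$. Then $\min(\mathcal{M})=\min(P(\mathcal{M}))$. Consequently $\min(\mathcal{M})=\min(\mathcal{M}^i)$ for all $i\ge 0$, and $\min(\mathcal{M})=\min(\mathcal{M}^\infty)$ whenever the limit $\mathcal{M}^\infty$ exists.
   Context: For $d\in\mathbb{N}$ a game is a set $\mathcal{M}\subseteq\mathbb{N}_0^d$ of moves. From position $\boldsymbol x\in\mathbb{N}_0^d$ a player may move to $\boldsymbol y\in\mathbb{N}_0^d$ iff $\boldsymbol x-\boldsymbol y\in\mathcal{M}$. Misère play: a player who cannot move wins. If $\boldsymbol 0\in\mathcal{M}$, $P(\mathcal{M})=\varnothing$. Otherwise: a position is an N-position if it has no option or some option is a P-position; otherwise it is a P-position; $P(\mathcal{M})$ denotes the set of P-positions. The $\star$-operator is $\mathcal{M}^\star=P(\mathcal{M})$; $\mathcal{M}^0=\mathcal{M}$, $\mathcal{M}^i=(\mathcal{M}^{i-1})^\star$. The limit $\mathcal{M}^\infty$ exists if every $\boldsymbol x$ is eventually always in or eventually always outside $\mathcal{M}^i$, and then is the set of those eventually always in. $\mathbb{N}_0^d$ carries the componentwise partial order $\preceq$; $\min(S)$ denotes the set of minimal elements of $S$, with $\min(\varnothing)=\varnothing$. *)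

From mathcomp Require Import all_boot.
Set Implicit Arguments. Unset Strict Implicit. Unset Printing Implicit Defensive.

(* Positions in N_0^d : finite functions 'I_d -> nat (extensional equality). *)
Definition pos (d : nat) := {ffun 'I_d -> nat}.

Definition pset (d : nat) := pos d -> Prop.

Definition zero_pos (d : nat) : pos d := [ffun _ => 0].

Definition ple d (x y : pos d) : Prop := forall i, x i <= y i.

(* y is an option of x in the game M : x - y ∈ M (with y ∈ N_0^d, i.e. y ≼ x) *)
Definition is_option d (M : pset d) (x y : pos d) : Prop :=
  ple y x /\ M [ffun i => x i - y i].

(* Misère P/N positions, as mutually inductive predicates (the game graph is
   well-founded when 0 ∉ M, so this is the unique solution of the recursion). *)
Inductive Ppos d (M : pset d) : pos d -> Prop :=
| PposI x : (exists y, is_option M x y) ->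
            (forall y, is_option M x y -> Npos M y) -> Ppos M x
with Npos d (M : pset d) : pos d -> Prop :=
| Npos_none x : (forall y, ~ is_option M x y) -> Npos M x
| Npos_P x y : is_option M x y -> Ppos M y -> Npos M x.

Definition Pset d (M : pset d) : pset d :=
  fun x => ~ M (zero_pos d) /\ Ppos M x.

Fixpoint Miter d (M : pset d) (i : nat) : pset d :=
  match i with 0 => M | i.+1 => Pset (Miter M i) end.

Definition lim_exists d (M : pset d) : Prop :=
  forall x, (exists n, forall i, n <= i -> Miter M i x) \/
            (exists n, forall i, n <= i -> ~ Miter M i x).

Definition Minf d (M : pset d) : pset d :=
  fun x => exists n, forall i, n <= i -> Miter M i x.

Definition min_elts d (S : pset d) : pset d :=
  fun x => S x /\ forall y, S y -> ple y x -> y = x.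

(* Every minimal move m of M is a P-position: its only option is 0, which has
   no option at all (as 0 is not a move), so moving to 0 wins in misère play.
   Conversely every P-position has an option, hence lies above some move.
   Thus min(M) is contained in P(M) and P(M) lies above M; by well-foundedness
   of the componentwise order any such set has the same minimal elements as M.
   Iterating, each M^i contains min(M) and lies above M, and so does M^oo,
   whether or not the limit exists. *)

From mathcomp Require Import all_boot.
From Stdlib Require Import Classical.
From mathcomp Require Import zify.
Set Implicit Arguments. Unset Strict Implicit.

Section Order.

Variable d : nat.

Lemma ple_refl (x : pos d) : ple x x.
Proof. by []. Qed.

Lemma ple_trans (x y z : pos d) : ple x y -> ple y z -> ple x z.
Proof. by move=> hxy hyz i; exact: leq_trans (hxy i) (hyz i). Qed.

Lemma ple_anti (x y : pos d) : ple x y -> ple y x -> x = y.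
Proof. by move=> hxy hyx; apply/ffunP => i; apply/eqP; rewrite eqn_leq hxy hyx. Qed.

Definition psum (x : pos d) : nat := \sum_i x i.

Lemma psum_lt_ple (x y : pos d) : ple x y -> x <> y -> psum x < psum y.
Proof.
move=> hle hne; rewrite /psum.
have -> : \sum_i y i = \sum_i x i + \sum_i (y i - x i).
  by rewrite -big_split /=; apply: eq_bigr => i _; have := hle i; lia.
suff : \sum_i (y i - x i) != 0 by lia.
apply: contra_notN hne; rewrite sum_nat_eq0 => /forallP hx0.
by apply/ffunP => i; have := hle i; have /= /eqP := hx0 i; lia.
Qed.

Lemma min_elts_below (S : pset d) y :
  S y -> exists m, min_elts S m /\ ple m y.
Proof.
have [n] := ubnP (psum y); elim: n y => // n IH y lt_yn Sy.
case: (classic (exists z, [/\ S z, ple z y & z <> y])) => [[z [Sz hzy hne]]|hmin].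
- have lt_zn : psum z < n by exact: leq_trans (psum_lt_ple hzy hne) lt_yn.
  have [m [hm hmz]] := IH z lt_zn Sz.
  by exists m; split=> //; exact: ple_trans hmz hzy.
- exists y; split=> //; split=> // z Sz hzy.
  by apply: NNPP => hne; apply: hmin; exists z.
Qed.

Lemma min_elts_sandwich (S T : pset d) :
  (forall x, min_elts S x -> T x) ->
  (forall y, T y -> exists s, S s /\ ple s y) ->
  forall x, min_elts S x <-> min_elts T x.
Proof.
move=> minST Tup x; split=> [hx|[Tx hTmin]].
- split; first exact: minST.
  move=> y Ty hyx; have [s [Ss hsy]] := Tup y Ty.
  have esx := (proj2 hx) s Ss (ple_trans hsy hyx).
  by apply: ple_anti hyx _; rewrite -esx.
- have [s [Ss hsx]] := Tup x Tx.
  have [m [hm hms]] := min_elts_below Ss.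
  by rewrite -(hTmin m (minST m hm) (ple_trans hms hsx)).
Qed.

End Order.

Section Game.

Variables (d : nat) (M : pset d).
Hypothesis M0 : ~ M (zero_pos d).

Lemma zero_no_option y : ~ is_option M (zero_pos d) y.
Proof.
move=> [_ My]; apply: M0.
suff -> : zero_pos d = [ffun i => zero_pos d i - y i] by [].
by apply/ffunP => i; rewrite !ffunE.
Qed.

Lemma Ppos_min_elts m : min_elts M m -> Ppos M m.
Proof.
move=> [Mm m_min]; constructor.
- exists (zero_pos d); split; first by move=> i; rewrite ffunE.
  suff -> : [ffun i => m i - zero_pos d i] = m by [].
  by apply/ffunP => i; rewrite !ffunE subn0.
- move=> y [le_ym My].
  have /ffunP e := m_min _ My (fun i => ltac:(rewrite ffunE; exact: leq_subr)).
  have -> : y = zero_pos d.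
    by apply/ffunP => i; have := e i; have := le_ym i; rewrite /zero_pos !ffunE /=; lia.
  by apply: Npos_none; exact: zero_no_option.
Qed.

Lemma Ppos_above x : Ppos M x -> exists m, M m /\ ple m x.
Proof.
case=> {}x [y [_ My]] _; exists [ffun i => x i - y i]; split=> // i.
by rewrite ffunE; exact: leq_subr.
Qed.

Lemma Pset_zero : ~ Pset M (zero_pos d).
Proof.
move=> [_ /Ppos_above[m [Mm le_m0]]]; apply: M0.
suff <- : m = zero_pos d by [].
by apply: ple_anti le_m0 _ => i; rewrite ffunE.
Qed.

Lemma min_elts_Pset x : min_elts M x <-> min_elts (Pset M) x.
Proof.
apply: min_elts_sandwich => [y /Ppos_min_elts|y [_]]; last exact: Ppos_above.
by split.
Qed.

End Game.

Section Iterates.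

Variables (d : nat) (M : pset d).
Hypothesis M0 : ~ M (zero_pos d).

Lemma Miter_zero i : ~ Miter M i (zero_pos d).
Proof. by elim: i => //= i; exact: Pset_zero. Qed.

Lemma min_elts_Miter i x : min_elts M x <-> min_elts (Miter M i) x.
Proof. by elim: i => //= i ->; exact/min_elts_Pset/Miter_zero. Qed.

Lemma Miter_above i y : Miter M i y -> exists m, M m /\ ple m y.
Proof.
elim: i y => [|i IH] y /=; first by exists y; split; last exact: ple_refl.
move=> [_ /Ppos_above[m [/IH[s [Ms le_sm]] le_my]]].
by exists s; split=> //; exact: ple_trans le_sm le_my.
Qed.

Lemma min_elts_Minf x : min_elts M x <-> min_elts (Minf M) x.
Proof.
apply: min_elts_sandwich => [y hy|y [n /(_ n (leqnn n))]]; last exact: Miter_above.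
by exists 0 => i _; have [] := proj1 (min_elts_Miter i y) hy.
Qed.

End Iterates.

Theorem lemma2 (d : nat) (hd : 0 < d) (M : pset d) (h0 : ~ M (zero_pos d)) :
  (forall x, min_elts M x <-> min_elts (Pset M) x) /\
  (forall i, forall x, min_elts M x <-> min_elts (Miter M i) x) /\
  (lim_exists M -> forall x, min_elts M x <-> min_elts (Minf M) x).
Proof.
split; first exact: min_elts_Pset.
split; first exact: min_elts_Miter.
by move=> _; exact: min_elts_Minf.
Qed.
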